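(* Let $n\ge2$, let $A\in\mathbb R^{n\times n}$ have $A_{i,i+1}=1$ ($i=1,\dots,n-1$) and all other entries $0$, and $b=(0,\dots,0,1)^T$ with entries $b_i$. Let $F_i,\bar F_i,P_i$ ($i=1,\dots,n$) and $Q$ be symmetric real $n\times n$ matrices, $P_{n+1}=0$, and $G,\bar G\in\mathbb R^{n\times n}$ with $i$th rows $G_i,\bar G_i$, such that for $i=1,\dots,n$ $$\bar F_i = F_i + P_{i+1} - \mathbf LP_i - b_iQ,\qquad \bar G_i = G_i - 2b^TP_iA.$$ Then $$\mathbf X_0P_1A = \sum_{i=1}^{n-1}\mathbf X_iF_iA + \tfrac12G - \sum_{i=1}^{n-1}\mathbf X_i\bar F_iA - \tfrac12\bar G.$$
   Context: Here $\mathbf L:\mathbb R^{n\times n}\to\mathbb R^{n\times n}$ is $\mathbf LP=A^TPA$, with $\mathbf L^0P=P$ and $\mathbf L^{k+1}=\mathbf L\circ\mathbf L^k$. $\mathbf X_0P$ is the $n\times n$ matrix whose $k$th row ($k=1,\dots,n$) is the $n$th row of $\mathbf L^{k-1}P$, and $\mathbf X_iP=(A^T)^i\mathbf X_0P$ for $i\ge1$. *)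

From HB Require Import structures.
From mathcomp Require Import all_boot all_order all_algebra.
Set Implicit Arguments. Unset Strict Implicit. Unset Printing Implicit Defensive.
Import Order.TTheory GRing.Theory Num.Theory.
Local Open Scope ring_scope.

(* Indices: the paper's 1-based index i (1..n) of rows/columns corresponds to
   the 0-based ordinal i-1 : 'I_n. Families F_i, P_i, ... are nat-indexed. *)

Section Defs.
Variables (R : realFieldType) (n : nat).

Definition Ashift : 'M[R]_n := \matrix_(i < n, j < n) ((j : nat) == i.+1)%:R.

Definition bvec : 'cV[R]_n := \col_(i < n) ((i : nat) == n.-1)%:R.

(* b_i for the paper's 1-based index i *)
Definition bentry (i : nat) : R := (i == n)%:R.

Definition Lop (P : 'M[R]_n) : 'M[R]_n := Ashift^T *m P *m Ashift.

Definition lastrow (M : 'M[R]_n) : 'rV[R]_n :=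
  \row_(j < n) \sum_(l < n | (l : nat) == n.-1) M l j.

Definition X0 (P : 'M[R]_n) : 'M[R]_n :=
  \matrix_(k < n) lastrow (iter k Lop P).

Definition Xop (i : nat) (P : 'M[R]_n) : 'M[R]_n :=
  iter i (mulmx Ashift^T) (X0 P).

End Defs.

From HB Require Import structures.
From mathcomp Require Import all_boot all_order all_algebra.
Import Order.TTheory GRing.Theory Num.Theory.
Local Open Scope ring_scope.

(* Row k (0-based) of X_i M is the last row of L^(k-i) M, and zero when k < i;
   moreover F_i - Fbar_i = L P_i - P_(i+1) for i < n.  Hence row k of
   \sum_i X_i (F_i - Fbar_i) telescopes to lastrow (L^k P_1) - lastrow P_(k+1),
   and lastrow P_(k+1) A is exactly row k of (G - Gbar) / 2. *)

Section ShiftOperators.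
Variables (R : realFieldType) (n : nat).
Local Notation A := (Ashift R n).
Local Notation L := (@Lop R n).

Lemma lastrowE (M : 'M[R]_n) : lastrow M = (bvec R n)^T *m M.
Proof.
apply/rowP => j; rewrite !mxE big_mkcond; apply: eq_bigr => l _.
by rewrite !mxE; case: eqP; rewrite ?mul1r ?mul0r.
Qed.

Lemma iter_LopB m (X Y : 'M[R]_n) : iter m L (X - Y) = iter m L X - iter m L Y.
Proof. by elim: m => //= m ->; rewrite /Lop mulmxBr mulmxBl. Qed.

Lemma row0_trAshift_mul (M : 'M[R]_n) (k : 'I_n) :
  k = 0%N :> nat -> row k (A^T *m M) = 0.
Proof.
move=> k0; apply/rowP => j; rewrite !mxE big1 // => l _.
by rewrite !mxE k0 mul0r.
Qed.

Lemma rowS_trAshift_mul (M : 'M[R]_n) (k l : 'I_n) :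
  k = l.+1 :> nat -> row k (A^T *m M) = row l M.
Proof.
move=> kl; apply/rowP => j; rewrite !mxE (bigD1 l) //= big1 ?addr0.
  by rewrite !mxE kl eqxx mul1r.
move=> l' /negbTE l'l; rewrite !mxE kl eqSS.
by rewrite (_ : (l == l' :> nat) = false) ?mul0r // eq_sym; apply: l'l.
Qed.

Lemma row_Xop i (M : 'M[R]_n) (k : 'I_n) :
  row k (Xop i M) = if (i <= k)%N then lastrow (iter (k - i) L M) else 0.
Proof.
elim: i k => [|i IH] k; first by rewrite subn0 rowK.
rewrite /Xop iterS -/(Xop i M).
case: k => [[|k] lt_k_n].
  by rewrite row0_trAshift_mul.
by rewrite (@rowS_trAshift_mul _ _ (Ordinal (ltnW lt_k_n))) // IH ltnS subSS.
Qed.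

Lemma XopB i (X Y : 'M[R]_n) : Xop i (X - Y) = Xop i X - Xop i Y.
Proof.
apply/row_matrixP => k; rewrite linearB /= !row_Xop.
by case: ifP => _; rewrite ?subr0 // iter_LopB !lastrowE mulmxBr.
Qed.

Lemma X0_telescope (P : nat -> 'M[R]_n) :
  X0 (P 1%N) =
    \sum_(1 <= i < n) Xop i (L (P i) - P i.+1) + \matrix_(k < n) lastrow (P k.+1).
Proof.
apply/row_matrixP => k; rewrite linearD raddf_sum /= rowK /X0 rowK.
pose g i := lastrow (iter (k.+1 - i) L (P i)).
have summand i : (1 <= i < n)%N ->
    row k (Xop i (L (P i) - P i.+1)) = if (i <= k)%N then g i - g i.+1 else 0.
  move=> _; rewrite row_Xop; case: ifP => // le_ik.
  by rewrite iter_LopB -iterSr /g subSn // subSS !lastrowE mulmxBr.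
rewrite (eq_big_nat _ _ summand) (big_cat_nat _ (n := k.+1)) //=.
rewrite [X in _ + X + _]big_nat_cond [X in _ + X + _]big1 => [|i]; last first.
  by case/andP=> /andP[lt_ki _] _; rewrite leqNgt lt_ki.
rewrite (telescope_sumr_eq (fun i => - g i)) => [|//|i /andP[_ lt_ik]]; last first.
  by rewrite -ltnS lt_ik opprK addrC.
by rewrite /g subnn subn1 addr0 opprK /= addrC addNKr.
Qed.
End ShiftOperators.

Theorem theorem4p6 (R : realFieldType) (n : nat) (hn : (2 <= n)%N)
    (F Fbar P : nat -> 'M_n) (Q G Gbar : 'M[R]_n)
    (hF : forall i, (1 <= i <= n)%N -> (F i)^T = F i)
    (hFbar : forall i, (1 <= i <= n)%N -> (Fbar i)^T = Fbar i)
    (hP : forall i, (1 <= i <= n)%N -> (P i)^T = P i)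
    (hQ : Q^T = Q)
    (hPn : P n.+1 = 0)
    (hFbarD : forall i, (1 <= i <= n)%N ->
       Fbar i = F i + P i.+1 - Lop (P i) - bentry R n i *: Q)
    (hGbarD : forall i : 'I_n,
       row i Gbar = row i G - 2 *: ((bvec R n)^T *m P i.+1 *m Ashift R n)) :
  X0 (P 1%N) *m Ashift R n =
    \sum_(1 <= i < n) Xop i (F i) *m Ashift R n + 2^-1 *: G
    - \sum_(1 <= i < n) Xop i (Fbar i) *m Ashift R n - 2^-1 *: Gbar.
Proof.
set D := \matrix_(k < n) lastrow (P k.+1).
have Gbar_E : Gbar = G - 2 *: (D *m Ashift R n).
  apply/row_matrixP => k; rewrite hGbarD [RHS]rowE mulmxBr -rowE -scalemxAr.
  by rewrite mulmxA -rowE rowK lastrowE.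
have sum_Xop_E : \sum_(1 <= i < n) Xop i (Lop (P i) - P i.+1) =
    \sum_(1 <= i < n) Xop i (F i) - \sum_(1 <= i < n) Xop i (Fbar i).
  rewrite -sumrB; apply: eq_big_nat => i /andP[le1i lt_in].
  rewrite -XopB hFbarD; last by rewrite le1i ltnW.
  rewrite /bentry (ltn_eqF lt_in) scale0r subr0.
  by rewrite -addrA opprD addrA subrr add0r opprB.
rewrite X0_telescope sum_Xop_E Gbar_E -!mulmx_suml mulmxDl mulmxBl.
rewrite scalerBr scalerA mulVf ?pnatr_eq0 // scale1r.
set h := 2^-1 *: G.
by rewrite opprB [in RHS](addrAC _ h) -[RHS]addrA [h + _]addrC subrK.
Qed.
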